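(* For every positive integer $n$ and every $w\in\mathfrak{H}$, $S_\hbar^t\bigl(\rho_{n,t}^{(\hbar)}(w)\bigr)=\rho_{n,0}^{(\hbar)}(w)$.
   Context: Let $\hbar,t$ be formal variables and $\mathfrak{H}=\mathbb{Q}[\hbar,t]\langle x,y\rangle$; $\mathfrak{H}^1=\mathbb{Q}[\hbar,t]+\mathfrak{H}y$, $z_j=x^{j-1}y$. Let $z_i\circ_+ z_j=z_{i+j}+\hbar z_{i+j-1}$ on the $\mathbb{Q}[\hbar,t]$-span of the $z_j$, extended to an action on $\mathfrak{H}^1$ by $z_i\circ_+1=0$, $z_i\circ_+(z_jw)=(z_i\circ_+z_j)w$. Let $S_\hbar^t:\mathfrak{H}^1\to\mathfrak{H}^1$ be the $\mathbb{Q}[\hbar,t]$-linear map with $S_\hbar^t(1)=1$, $S_\hbar^t(z_kw)=z_kS_\hbar^t(w)+t\,z_k\circ_+S_\hbar^t(w)$ for words $w\in\mathfrak{H}^1$. Let $\gamma_\hbar^t$ be the algebra automorphism of $\mathfrak{H}$ with $\gamma_\hbar^t(x)=x$, $\gamma_\hbar^t(y)=tx+y+\hbar t$. For $n\ge1$, make $\mathfrak{H}^{\otimes(n+1)}$ (tensor over $\mathbb{Q}[\hbar,t]$) an $\mathfrak{H}$-bimodule by $a\diamond(w_1\otimes\cdots\otimes w_{n+1})=w_1\otimes\cdots\otimes w_n\otimes aw_{n+1}$ and $(w_1\otimes\cdots\otimes w_{n+1})\diamond b=w_1b\otimes w_2\otimes\cdots\otimes w_{n+1}$. Let $\mathcal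 C_{n,t}^{(\hbar)}:\mathfrak{H}\to\mathfrak{H}^{\otimes(n+1)}$ be the $\mathbb{Q}[\hbar,t]$-linear map with $\mathcal C_{n,t}^{(\hbar)}(x)=-\mathcal C_{n,t}^{(\hbar)}(y)=x\otimes((1-t)x+y-\hbar t)^{\otimes(n-1)}\otimes y$ and $\mathcal C_{n,t}^{(\hbar)}(vw)=\mathcal C_{n,t}^{(\hbar)}(v)\diamond(\gamma_\hbar^t)^{-1}(w)+(\gamma_\hbar^t)^{-1}(v)\diamond\mathcal C_{n,t}^{(\hbar)}(w)$ (so $\mathcal C_{n,t}^{(\hbar)}(1)=0$). Let $M_n:\mathfrak{H}^{\otimes(n+1)}\to\mathfrak{H}$ be multiplication $w_1\otimes\cdots\otimes w_{n+1}\mapsto w_1\cdots w_{n+1}$, and $\rho_{n,t}^{(\hbar)}=M_n\circ\mathcal C_{n,t}^{(\hbar)}$; $\rho_{n,0}^{(\hbar)}$ denotes the same map with $t=0$. The map $\rho_{n,t}^{(\hbar)}$ takes values in $\mathfrak{H}y\subset\mathfrak{H}^1$, so $S_\hbar^t$ can be applied. *)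

From HB Require Import structures.
From mathcomp Require Import all_boot all_order all_algebra.
From mathcomp Require Import finmap.
From mathcomp.multinomials Require Import monalg.
Set Implicit Arguments. Unset Strict Implicit. Unset Printing Implicit Defensive.
Import GRing.Theory.
Local Open Scope ring_scope.

(* Coefficient ring Q[hbar,t] := {poly {poly rat}} ;
   hbar is the inner variable, t the outer one. *)
Definition K : comRingType := {poly {poly rat}}.
Definition hb : K := ('X : {poly rat})%:P.
Definition tv : K := 'X.

(* The free algebra H = Q[hbar,t]<x,y> : the monoid algebra of the free
   monoid on two letters; letter [true] is x, letter [false] is y. *)
Definition H := {malg K[{fmonom bool}]}.
Definition wd (s : seq bool) : H := << FMonom s >>.
Definition x : H := wd [:: true].
Definition y : H := wd [:: false].
Definition z (k : nat) : H := x ^+ k.-1 * y.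

Definition lin {M : choiceType} {V : lmodType K} (h : M -> V)
  (g : {malg K[M]}) : V := \sum_(m <- msupp g) g@_m *: h m.

Definition subst (a b : H) : H -> H :=
  lin (fun m : {fmonom bool} => \prod_(c <- fmonom_val m) (if c then a else b)).

Definition gamma (t : K) : H -> H := subst x (t *: x + y + (hb * t) *: 1).
Definition gammainv (t : K) : H -> H := subst x (y - t *: x - (hb * t) *: 1).

(* H^{(n+1)} := tensor power (over K) of H, free on (n+1)-tuples of words. *)
Definition Tn (n : nat) := {malg K[{ffun 'I_n.+1 -> {fmonom bool}}]}.

(* bimodule structure: a <> w = w_1 (x) ... (x) a w_{n+1},
                         w <> b = w_1 b (x) w_2 (x) ... *)
Definition lact (n : nat) (a : H) (u : Tn n) : Tn n :=
  lin (fun m : {fmonom bool} => lin (fun f : {ffun 'I_n.+1 -> {fmonom bool}} =>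
    << [ffun i => if i == ord_max then FMonom (fmonom_val m ++ fmonom_val (f i))
                  else f i] >> : Tn n) u) a.
Definition ract (n : nat) (u : Tn n) (b : H) : Tn n :=
  lin (fun m : {fmonom bool} => lin (fun f : {ffun 'I_n.+1 -> {fmonom bool}} =>
    << [ffun i => if i == ord0 then FMonom (fmonom_val (f i) ++ fmonom_val m)
                  else f i] >> : Tn n) u) b.

(* Pure tensor u_0 (x) u_1 (x) ... (x) u_n (multilinear expansion). *)
Definition extend (n : nat) (f : {ffun 'I_n.+1 -> {fmonom bool}})
  (m : {fmonom bool}) : {ffun 'I_n.+2 -> {fmonom bool}} :=
  [ffun i => if unlift ord_max i is Some j then f j else m].

Fixpoint tens (n : nat) : ('I_n.+1 -> H) -> Tn n :=
  match n return ('I_n.+1 -> H) -> Tn n with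
  | 0 => fun u => lin (fun m : {fmonom bool} =>
            << [ffun _ => m] >> : Tn 0) (u ord0)
  | n'.+1 => fun u =>
      lin (fun f : {ffun 'I_n'.+1 -> {fmonom bool}} =>
             lin (fun m : {fmonom bool} => << extend f m >> : Tn n'.+1)
                 (u ord_max))
          (tens (fun j => u (widen_ord (leqnSn _) j)))
  end.

Definition Cx (n : nat) (t : K) : Tn n :=
  tens (fun i : 'I_n.+1 => if (i == 0 :> nat) then x
                           else if (i == n :> nat) then y
                           else (1 - t) *: x + y - (hb * t) *: 1).

(* C on words, via C(a w) = C(a) <> gamma^{-1}(w) + gamma^{-1}(a) <> C(w),
   C(1) = 0, C(y) = - C(x). *)
Fixpoint Cw (n : nat) (t : K) (s : seq bool) : Tn n :=
  match s with
  | [::] => 0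
  | a :: s' =>
      ract (if a then Cx n t else - Cx n t) (gammainv t (wd s'))
      + lact (gammainv t (wd [:: a])) (Cw n t s')
  end.

Definition C (n : nat) (t : K) : H -> Tn n :=
  lin (fun m : {fmonom bool} => Cw n t (fmonom_val m)).

Definition Mn (n : nat) : Tn n -> H :=
  lin (fun f : {ffun 'I_n.+1 -> {fmonom bool}} =>
         wd (flatten [seq fmonom_val (f i) | i <- enum 'I_n.+1])).

Definition rho (n : nat) (t : K) (w : H) : H := Mn (C n t w).

(* z_i o_+ (x^j s) ; the case x^j y s' = z_{j+1} s' gives
   (z_{i+j+1} + hbar z_{i+j}) s' ; z_i o_+ 1 = 0.
   (words x^j with j > 0 are not in H^1; value 0 there is a junk value.) *)
Fixpoint circw (i j : nat) (s : seq bool) : H :=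
  match s with
  | [::] => 0
  | a :: s' => if a then circw i j.+1 s'
               else (z (i + j.+1) + hb *: z (i + j)) * wd s'
  end.
Definition circ (i : nat) : H -> H :=
  lin (fun m : {fmonom bool} => circw i 0 (fmonom_val m)).

(* Sx t k s = S_hbar^t (x^k s) for x^k s in H^1:
   S(1) = 1, S(z_{k+1} s') = z_{k+1} S(s') + t z_{k+1} o_+ S(s').
   (words x^k, k > 0, are not in H^1; value 0 there is a junk value.) *)
Fixpoint Sx (t : K) (k : nat) (s : seq bool) : H :=
  match s with
  | [::] => if k is 0 then 1 else 0
  | a :: s' => if a then Sx t k.+1 s'
               else let r := Sx t 0 s' in z k.+1 * r + t *: circ k.+1 r
  end.
Definition S (t : K) : H -> H :=
  lin (fun m : {fmonom bool} => Sx t 0 (fmonom_val m)).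

(* Key identity: S_t(v y) = gamma_t(v) y for every v in H.  Indeed, when
   S_t(w) ends in y, z_{k+1} o_+ S_t(w) = x^k (x + hbar) S_t(w), so
   S_t(z_{k+1} w) = x^k (y + t x + hbar t) S_t(w) = x^k gamma_t(y) S_t(w).
   Since n >= 1, the last tensor factor of C_t(x) is y, and unfolding the
   recursion for C on a word w shows that every summand of
   M_n(a <> C_t(w) <> b) ends with that y.  There S_t acts as gamma_t on what
   precedes the y; gamma_t undoes the gamma_t^{-1} inserted by C_t and sends
   the middle factor (1-t)x + y - hbar t of C_t(x) to x + y, the middle factor
   of C_0(x).  Hence, by induction on w,
   S_t(M_n(a <> C_t(w) <> b)) = M_n(gamma_t a <> C_0(w) <> gamma_t b),
   and a = b = 1 gives the theorem. *)

From HB Require Import structures.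
From mathcomp Require Import all_boot all_order all_algebra.
From mathcomp Require Import finmap.
From mathcomp.multinomials Require Import monalg.
Import GRing.Theory.
Local Open Scope ring_scope.

Section LinearExtension.
Context {M : choiceType} {V : lmodType K}.

Lemma lin_supp (h : M -> V) {g : {malg K[M]}} {d : {fset M}} :
  (msupp g `<=` d)%fset -> lin h g = \sum_(m <- d) g@_m *: h m.
Proof.
move=> le_gd; rewrite /lin (big_fset_incl _ le_gd) //= => m _ /mcoeff_outdom ->.
by rewrite scale0r.
Qed.

Lemma lin_is_linear (h : M -> V) : linear (lin h).
Proof.
move=> c u v; pose d := (msupp u `|` msupp v)%fset.
rewrite !(@lin_supp h _ d) ?fsubsetUl ?fsubsetUr //; last first.
  by rewrite (fsubset_trans (msuppD_le _ _)) // fsetSU // msuppZ_le.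
rewrite scaler_sumr -big_split; apply: eq_bigr => m _.
by rewrite mcoeffD mcoeffZ scalerDl scalerA.
Qed.

HB.instance Definition _ (h : M -> V) :=
  GRing.isLinear.Build K {malg K[M]} V *:%R (lin h) (lin_is_linear h).

Lemma linU (h : M -> V) (m : M) : lin h << m >> = h m.
Proof. by rewrite (lin_supp h msuppU_le) big_seq_fset1 mcoeffUU scale1r. Qed.

Lemma eq_lin {h1 h2 : M -> V} : h1 =1 h2 -> lin h1 =1 lin h2.
Proof. by move=> eh g; apply: eq_bigr => m _; rewrite eh. Qed.

Lemma lin_comp {U W : lmodType K} (F : {linear U -> W}) (h : M -> U) g :
  F (lin h g) = lin (fun m => F (h m)) g.
Proof. by rewrite linear_sum; apply: eq_bigr => m _; rewrite linearZ. Qed.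

Lemma lin_mon (g : {malg K[M]}) : lin (fun m => << m >>) g = g.
Proof.
rewrite [RHS]monalgE; apply: eq_bigr => m _.
by apply/malgP=> k; rewrite mcoeffZ !mcoeffU mulrnAr mulr1.
Qed.

Lemma linear_malg_ext (F G : {malg K[M]} -> V) : linear F -> linear G ->
  (forall m, F << m >> = G << m >>) -> F =1 G.
Proof.
move=> linF linG eFG g.
pose LF : {linear _ -> V} := HB.pack F (GRing.isLinear.Build K _ V *:%R F linF).
pose LG : {linear _ -> V} := HB.pack G (GRing.isLinear.Build K _ V *:%R G linG).
have := lin_comp LF (fun m => << m >>) g; have := lin_comp LG (fun m => << m >>) g.
by rewrite /= lin_mon => -> ->; apply: eq_lin.
Qed.

Lemma lin_linear {F : {malg K[M]} -> V} : linear F -> lin (fun m => F << m >>) =1 F.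
Proof.
move=> linF; apply: linear_malg_ext => [||m]; [exact: linearP | exact: linF | exact: linU].
Qed.

Lemma lin_swap (M' : choiceType) (h : M -> M' -> V) g (g' : {malg K[M']}) :
  lin (fun m => lin (h m) g') g = lin (fun m' => lin (h^~ m') g) g'.
Proof.
rewrite /lin; under eq_bigr do rewrite scaler_sumr.
rewrite exchange_big /=; apply: eq_bigr => m' _; rewrite scaler_sumr.
by apply: eq_bigr => m _; rewrite !scalerA mulrC.
Qed.

End LinearExtension.

Lemma lin_comp2 (M M' : choiceType) (U W : lmodType K) (F : {linear U -> W})
    (h : M -> M' -> U) g (g' : {malg K[M']}) :
  F (lin (fun m => lin (h m) g') g) = lin (fun m' => lin (fun m => F (h m m')) g) g'.
Proof. by rewrite lin_comp (eq_lin (fun m => lin_comp F (h m) g')) lin_swap. Qed.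

Lemma malg_scalerAr (c : K) (a b : H) : c *: (a * b) = a * (c *: b).
Proof.
apply/malgP=> k; rewrite mcoeffZ (mcoeffMl a b k).
rewrite (@mcoeffMlw _ _ (msupp a) (msupp b) a (c *: b)) ?msuppZ_le //.
rewrite mulr_sumr; apply: eq_bigr => k1 _; rewrite mulr_sumr; apply: eq_bigr => k2 _.
by rewrite mcoeffZ mulrnAr mulrCA.
Qed.

HB.instance Definition _ := GRing.Lalgebra.on H.
HB.instance Definition _ := GRing.Lalgebra_isAlgebra.Build K H malg_scalerAr.

Section LinearMul.
Variables (f : {linear H -> H}) (a b : H).

Lemma linear_compMr : linear (fun v => f (v * a)).
Proof. by move=> c u v /=; rewrite mulrDl -scalerAl linearP. Qed.

Lemma linear_compMl : linear (fun v => f (a * v)).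
Proof. by move=> c u v /=; rewrite mulrDr -scalerAr linearP. Qed.

Lemma linear_Mr : linear (fun v => f v * a).
Proof. by move=> c u v /=; rewrite linearP mulrDl scalerAl. Qed.

Lemma linear_Ml : linear (fun v => a * f v).
Proof. by move=> c u v /=; rewrite linearP mulrDr scalerAr. Qed.

Lemma linear_sandwich : linear (fun v : H => a * v * b).
Proof. by move=> c u v /=; rewrite mulrDr mulrDl -scalerAr -scalerAl. Qed.

End LinearMul.

Lemma lin_mulr (M : choiceType) (h : M -> H) q g : lin (fun m => h m * q) g = lin h g * q.
Proof. by rewrite /lin mulr_suml; apply: eq_bigr => m _; rewrite scalerAl. Qed.

Lemma lin_mull (M : choiceType) (h : M -> H) q g : lin (fun m => q * h m) g = q * lin h g.
Proof. by rewrite /lin mulr_sumr; apply: eq_bigr => m _; rewrite scalerAr. Qed.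

Lemma lin_sandwich (a b g : H) : lin (fun m => a * << m >> * b) g = a * g * b.
Proof. exact: lin_linear (linear_sandwich a b) g. Qed.

Lemma wd_cat s1 s2 : wd (s1 ++ s2) = wd s1 * wd s2.
Proof.
rewrite /wd malgM_def fgmulUU mulr1; congr (<< _ *g _ >>).
by apply/eqP; rewrite fmP /= fmM.
Qed.

Lemma wd_nil : wd [::] = 1.
Proof. by congr (<< _ >>); apply/eqP; rewrite fmP fm1. Qed.

Lemma wd_cons c s : wd (c :: s) = wd [:: c] * wd s.
Proof. by rewrite -cat1s wd_cat. Qed.

Lemma wd_rcons s c : wd (rcons s c) = wd s * wd [:: c].
Proof. by rewrite -cats1 wd_cat. Qed.

Lemma wd_flatten (I : Type) (r : seq I) (g : I -> seq bool) :
  wd (flatten [seq g i | i <- r]) = \prod_(i <- r) wd (g i).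
Proof.
elim: r => [|i r IHr]; first by rewrite big_nil wd_nil.
by rewrite /= wd_cat IHr big_cons.
Qed.

Lemma wdK (m : {fmonom bool}) : wd (fmonom_val m) = << m >>.
Proof. by rewrite /wd fmK. Qed.

Lemma mon_cat (m1 m2 : {fmonom bool}) :
  << FMonom (fmonom_val m1 ++ fmonom_val m2) >> = << m1 >> * << m2 >> :> H.
Proof. by rewrite -[LHS]/(wd _) wd_cat !wdK. Qed.

Section Substitution.
Variables a b : H.

HB.instance Definition _ := GRing.Linear.on (subst a b).

Lemma subst_wd s : subst a b (wd s) = \prod_(c <- s) (if c then a else b).
Proof. exact: linU. Qed.

Lemma subst_is_monoid_morphism : monoid_morphism (subst a b).
Proof.
split=> [|p q]; first by rewrite -[1 in LHS]wd_nil subst_wd big_nil.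
move: p; apply: linear_malg_ext => [||m1]; [exact: linear_compMr | exact: linear_Mr|].
move: q; apply: linear_malg_ext => [||m2]; [exact: linear_compMl | exact: linear_Ml|].
by rewrite -!wdK -wd_cat !subst_wd big_cat.
Qed.

HB.instance Definition _ :=
  GRing.isMonoidMorphism.Build H H (subst a b) subst_is_monoid_morphism.

Lemma subst1 : subst a b 1 = 1.
Proof. exact: rmorph1. Qed.

Lemma subst_x : subst a b x = a.
Proof. by rewrite subst_wd big_seq1. Qed.

Lemma subst_y : subst a b y = b.
Proof. by rewrite subst_wd big_seq1. Qed.

Lemma substZ c p : subst a b (c *: p) = c *: subst a b p.
Proof. exact: linearZ. Qed.

Lemma subst_affine (u v w : H) (c d : K) :
  subst a b (c *: u + v - d *: w) = c *: subst a b u + subst a b v - d *: subst a b w.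
Proof. by rewrite linearB linearD !linearZ. Qed.

End Substitution.

Lemma subst_id : subst x y =1 id.
Proof.
apply: linear_malg_ext => [c u v|//|m]; first by rewrite linearP.
rewrite -wdK subst_wd.
elim: (fmonom_val m) => [|c s IHs]; first by rewrite big_nil wd_nil.
by rewrite big_cons IHs wd_cons; case: c.
Qed.

Lemma subst_comp a b a' b' p :
  subst a b (subst a' b' p) = subst (subst a b a') (subst a b b') p.
Proof.
move: p; apply: linear_malg_ext => [c u v | c u v | m]; try by rewrite /= !linearP.
by rewrite -wdK !subst_wd rmorph_prod; apply: eq_bigr => -[].
Qed.

Lemma subst_inverse b b' : subst x b b' = y -> cancel (subst x b') (subst x b).
Proof. by move=> e p; rewrite subst_comp subst_x e subst_id. Qed.

HB.instance Definition _ t := GRing.LRMorphism.on (gamma t).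

Lemma gammaK t : cancel (gammainv t) (gamma t).
Proof.
apply: subst_inverse; rewrite !linearB /= !substZ subst_x subst_y rmorph1.
by rewrite addrAC addrK addrC addKr.
Qed.

Lemma gammainv0 : gammainv 0 =1 id.
Proof. by move=> p; rewrite /gammainv scale0r mulr0 scale0r !subr0 subst_id. Qed.

Section GammaValues.
Variable t : K.

Lemma gamma1 : gamma t 1 = 1. Proof. exact: rmorph1. Qed.
Lemma gammaM : {morph gamma t : p q / p * q}. Proof. exact: rmorphM. Qed.
Lemma gamma_x : gamma t x = x. Proof. exact: subst_x. Qed.
Lemma gamma_y : gamma t y = t *: x + y + (hb * t)%:A. Proof. exact: subst_y. Qed.

Lemma gamma_prod (I : Type) (r : seq I) (F : I -> H) :
  gamma t (\prod_(i <- r) F i) = \prod_(i <- r) gamma t (F i).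
Proof. exact: rmorph_prod. Qed.

End GammaValues.

(* Identities used with [exact:] on concrete elements of [H]: proving them in
   place by rewriting makes unification unfold the monoid-algebra operations. *)
Section AlgebraIdentities.
Variables (R : comPzRingType) (A : algType R).
Implicit Types (X Y G P W a b c d e : A) (s u v : R).

Lemma mulr_exprS_mulA P X W k : P * X ^+ k.+1 * W = P * X ^+ k * (X * W).
Proof. by rewrite exprSr !mulrA. Qed.

Lemma exprS_mulA X G Y k : X ^+ k.+1 * G * Y = X ^+ k * (X * G) * Y.
Proof. by rewrite exprSr -(mulrA _ X). Qed.

Lemma expr0_mul X G Y : X ^+ 0 * G * Y = G * Y.
Proof. by rewrite expr0 mul1r. Qed.

Lemma mulr_expr0A P X W Y : P * X ^+ 0 * (W * Y) = P * W * Y.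
Proof. by rewrite expr0 mulr1 mulrA. Qed.

Lemma mulr_last P a Y : P * (a * Y * 1) = P * a * Y.
Proof. by rewrite mulr1 mulrA. Qed.

Lemma expr_shift_mulr X Y W s i j :
  (X ^+ (i + j).+1 * Y + s *: (X ^+ (i + j) * Y)) * W
  = X ^+ i * (X + s%:A) * X ^+ j * (Y * W).
Proof.
rewrite mulrDr mulr_algr mulrDl -exprSr -scalerAl -!exprD addSn.
by rewrite scalerAl -mulrDl !mulrA.
Qed.

Lemma expr_base X Y s k : X ^+ k * Y * 1 + s *: 0 = X ^+ k * 1 * Y.
Proof. by rewrite scaler0 addr0 !mulr1. Qed.

Lemma expr_twist X Y G s u k :
  X ^+ k * Y * (X ^+ 0 * G * Y) + u *: (X ^+ k * (X + s%:A) * (X ^+ 0 * G) * Y)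
  = X ^+ k * ((u *: X + Y + (s * u)%:A) * G) * Y.
Proof.
rewrite expr0 !mul1r -!mulrA scalerAr -mulrDr; congr (_ * _).
rewrite scalerAl -mulrDl; congr (_ * _).
by rewrite scalerDr scalerA mulrC addrCA addrA.
Qed.

Lemma affine_slot_shift X Y W s u v :
  (1 - s) *: X + (s *: X + Y + u *: W) - u *: W = (1 - 0) *: X + Y - (v * 0) *: W.
Proof.
by rewrite subr0 scale1r mulr0 scale0r subr0 addrA addrK addrA -scalerDl subrK scale1r.
Qed.

Lemma mulrA_ract_slot a b c d e : a * (b * c) * d * e = a * b * c * (d * e).
Proof. by rewrite !mulrA. Qed.

Lemma mulrA_ract a b c d : a * b * (c * d) = a * (b * c) * d.
Proof. by rewrite !mulrA. Qed.

Lemma mulrA_lact_slot a b c d e : a * (b * (c * d) * e) = a * b * c * (d * e).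
Proof. by rewrite !mulrA. Qed.

Lemma mulrA_lact a b c d e : a * b * c * (d * e) = a * (b * c * d * e).
Proof. by rewrite !mulrA. Qed.

End AlgebraIdentities.

Lemma circw_cons_true i j s : circw i j (true :: s) = circw i j.+1 s.
Proof. by []. Qed.

Lemma circw_cons_false i j s :
  circw i j (false :: s) = (z (i + j.+1) + hb *: z (i + j)) * wd s.
Proof. by []. Qed.

Lemma circw_false_in {i j s} : false \in s ->
  circw i.+1 j s = x ^+ i * (x + hb%:A) * x ^+ j * wd s.
Proof.
elim: s j => [//|[] s IHs] j Fs.
- rewrite in_cons /= in Fs.
  rewrite circw_cons_true (IHs _ Fs) wd_cons; exact: mulr_exprS_mulA.
- rewrite circw_cons_false wd_cons addSn addnS; exact: expr_shift_mulr.
Qed.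

Lemma circ1 i : circ i 1 = 0.
Proof. by rewrite -wd_nil; exact: linU. Qed.

Lemma circS_mulr_y i v : circ i.+1 (v * y) = x ^+ i * (x + hb%:A) * v * y.
Proof.
move: v; apply: linear_malg_ext => [||m]; [exact: linear_compMr | exact: linear_sandwich|].
have Fm : false \in rcons (fmonom_val m) false by rewrite mem_rcons mem_head.
rewrite -wdK -[_ * y](wd_rcons _ false) /circ linU (circw_false_in Fm) wd_rcons.
exact: mulr_expr0A.
Qed.

Lemma Sx_cons_true t k s : Sx t k (true :: s) = Sx t k.+1 s.
Proof. by []. Qed.

Lemma Sx_cons_false t k s :
  Sx t k (false :: s) = z k.+1 * Sx t 0 s + t *: circ k.+1 (Sx t 0 s).
Proof. by []. Qed.

Lemma Sx_rcons t k s : Sx t k (rcons s false) = x ^+ k * gamma t (wd s) * y.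
Proof.
elim: s k => [|[] s IHs] k.
- rewrite Sx_cons_false circ1 wd_nil gamma1; exact: expr_base.
- rewrite rcons_cons Sx_cons_true IHs wd_cons gammaM gamma_x; exact: exprS_mulA.
rewrite rcons_cons Sx_cons_false IHs circS_mulr_y wd_cons gammaM gamma_y.
exact: expr_twist.
Qed.

Lemma S_mulr_y t v : S t (v * y) = gamma t v * y.
Proof.
move: v; apply: linear_malg_ext => [||m]; [exact: linear_compMr | exact: linear_Mr|].
rewrite -wdK -[_ * y](wd_rcons _ false) /S linU Sx_rcons; exact: expr0_mul.
Qed.

(* [Mins pre post T] multiplies out [T] after inserting [pre i] and [post i]
   around its i-th tensor factor; [M_n (a <> T <> b)] is the case where [pre]
   is [a] at the last slot and [post] is [b] at the first, [1] elsewhere. *)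
Definition Mins {n} (pre post : 'I_n.+1 -> H) : Tn n -> H :=
  lin (fun f : {ffun 'I_n.+1 -> {fmonom bool}} =>
         \prod_(i < n.+1) (pre i * << f i >> * post i)).

HB.instance Definition _ n pre post := GRing.Linear.on (@Mins n pre post).

Lemma Mins_mon n (pre post : 'I_n.+1 -> H) f :
  Mins pre post << f >> = \prod_(i < n.+1) (pre i * << f i >> * post i).
Proof. exact: linU. Qed.

Lemma Mn_Mins n (T : Tn n) : Mn T = Mins (fun _ => 1) (fun _ => 1) T.
Proof.
apply: eq_lin => f; rewrite wd_flatten [index_enum _]unlock -enumT.
by apply: eq_bigr => i _; rewrite wdK mul1r mulr1.
Qed.

Lemma lift0_eq0F n (i : 'I_n) : (lift ord0 i == ord0 :> 'I_n.+1) = false.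
Proof. by rewrite eq_sym (negbTE (neq_lift _ _)). Qed.

Lemma widen_eq_maxF n (i : 'I_n) : (widen_ord (leqnSn n) i == ord_max) = false.
Proof. by rewrite -val_eqE /= ltn_eqF. Qed.

Lemma Mins_ract n (pre post : 'I_n.+1 -> H) (T : Tn n) b :
  Mins pre post (ract T b) = Mins pre (fun i => if i == ord0 then b * post i else post i) T.
Proof.
rewrite /ract lin_comp2; apply: eq_lin => f /=.
rewrite big_ord_recl eqxx; under [in RHS]eq_bigr do rewrite lift0_eq0F.
set R := \prod_(i < n) _.
rewrite (eq_lin (h2 := fun m => pre ord0 * << f ord0 >> * << m >> * (post ord0 * R))).
  by rewrite lin_sandwich; exact: mulrA_ract.
move=> m; rewrite Mins_mon big_ord_recl ffunE eqxx mon_cat.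
under eq_bigr do rewrite ffunE lift0_eq0F.
exact: mulrA_ract_slot.
Qed.

Lemma Mins_lact n (pre post : 'I_n.+1 -> H) (T : Tn n) a :
  Mins pre post (lact a T) = Mins (fun i => if i == ord_max then pre i * a else pre i) post T.
Proof.
rewrite /lact lin_comp2; apply: eq_lin => f /=.
rewrite big_ord_recr eqxx; under [in RHS]eq_bigr do rewrite widen_eq_maxF.
set R := \prod_(i < n) _.
rewrite (eq_lin (h2 := fun m => R * pre ord_max * << m >> * (<< f ord_max >> * post ord_max))).
  by rewrite lin_sandwich; exact: mulrA_lact.
move=> m; rewrite Mins_mon big_ord_recr ffunE eqxx mon_cat.
under eq_bigr do rewrite ffunE widen_eq_maxF.
exact: mulrA_lact_slot.
Qed.

Lemma Mins_ract_lact n (pre post : 'I_n.+1 -> H) (T1 T2 : Tn n) b a :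
  Mins pre post (ract T1 b + lact a T2)
  = Mins pre (fun i => if i == ord0 then b * post i else post i) T1
    + Mins (fun i => if i == ord_max then pre i * a else pre i) post T2.
Proof. by rewrite linearD /=; apply: (f_equal2 +%R); [exact: Mins_ract | exact: Mins_lact]. Qed.

Lemma extend_widen n (f : {ffun 'I_n.+1 -> {fmonom bool}}) m :
  [ffun i => extend f m (widen_ord (leqnSn n.+1) i)] = f.
Proof.
apply/ffunP => i; rewrite !ffunE.
have -> : widen_ord (leqnSn n.+1) i = lift ord_max i.
  by apply: val_inj; rewrite /= /bump leqNgt ltn_ord.
by rewrite liftK.
Qed.

Lemma extend_max n (f : {ffun 'I_n.+1 -> {fmonom bool}}) m : extend f m ord_max = m.
Proof. by rewrite ffunE unlift_none. Qed.

Lemma Mins_mon_recr n (pre post : 'I_n.+2 -> H) (g : {ffun 'I_n.+2 -> {fmonom bool}}) :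
  Mins pre post << g >>
  = Mins (fun i => pre (widen_ord (leqnSn n.+1) i)) (fun i => post (widen_ord (leqnSn n.+1) i))
      << [ffun i => g (widen_ord (leqnSn n.+1) i)] >> * (pre ord_max * << g ord_max >> * post ord_max).
Proof. by rewrite !Mins_mon big_ord_recr; under [in RHS]eq_bigr do rewrite ffunE. Qed.

Lemma Mins_extend {n} {pre post : 'I_n.+2 -> H} f m :
  Mins pre post << extend f m >>
  = Mins (fun i => pre (widen_ord (leqnSn n.+1) i)) (fun i => post (widen_ord (leqnSn n.+1) i))
      << f >> * (pre ord_max * << m >> * post ord_max).
Proof. by rewrite Mins_mon_recr extend_widen extend_max. Qed.

Lemma tensS n (u : 'I_n.+2 -> H) :
  tens u = lin (fun f => lin (fun m => << extend f m >>) (u ord_max))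
               (tens (fun j => u (widen_ord (leqnSn n.+1) j))).
Proof. by []. Qed.

Lemma Mins_tens n (pre post u : 'I_n.+1 -> H) :
  Mins pre post (tens u) = \prod_(i < n.+1) (pre i * u i * post i).
Proof.
elim: n pre post u => [|n IHn] pre post u.
  rewrite lin_comp big_ord1 -lin_sandwich; apply: eq_lin => m /=.
  by rewrite Mins_mon big_ord1 ffunE.
rewrite tensS lin_comp big_ord_recr -IHn; move: (tens _) => T.
under eq_lin => f do rewrite lin_comp (eq_lin (Mins_extend f)) lin_mull lin_sandwich.
by rewrite lin_mulr (lin_linear (linearP _)).
Qed.

Definition Cx_slot n t (i : 'I_n.+1) : H :=
  if (i == 0 :> nat) then x else if (i == n :> nat) then y
  else (1 - t) *: x + y - (hb * t) *: 1.

Lemma Cx_tens n t : Cx n t = tens (Cx_slot n t).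
Proof. by []. Qed.

Lemma Cx_slot_max {n t} : (0 < n)%N -> Cx_slot n t ord_max = y.
Proof. by move=> n_gt0; rewrite /Cx_slot /= eqn0Ngt n_gt0 eqxx. Qed.

Lemma gamma_Cx_slot n t (i : 'I_n) :
  gamma t (Cx_slot n t (widen_ord (leqnSn n) i)) = Cx_slot n 0 (widen_ord (leqnSn n) i).
Proof.
rewrite /Cx_slot /= (ltn_eqF (ltn_ord i)) /=; case: (i == 0 :> nat); first exact: gamma_x.
rewrite /gamma subst_affine subst_x subst_y subst1; exact: affine_slot_shift.
Qed.

Lemma Mins_Cx {n t} {pre post : 'I_n.+1 -> H} : (0 < n)%N -> post ord_max = 1 ->
  Mins pre post (Cx n t) = (\prod_(i < n) (pre (widen_ord (leqnSn n) i)
      * Cx_slot n t (widen_ord (leqnSn n) i) * post (widen_ord (leqnSn n) i))) * pre ord_max * y.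
Proof.
move=> n_gt0 post1; rewrite Cx_tens Mins_tens big_ord_recr (Cx_slot_max n_gt0) post1.
exact: mulr_last.
Qed.

Lemma Cw_cons n t c s : Cw n t (c :: s) =
  ract (if c then Cx n t else - Cx n t) (gammainv t (wd s)) + lact (gammainv t (wd [:: c])) (Cw n t s).
Proof. by []. Qed.

Section GammaTwist.
Variables (n : nat) (t : K).
Hypothesis n_gt0 : (0 < n)%N.

Lemma ord_max_eq0F : (ord_max == ord0 :> 'I_n.+1) = false.
Proof. by rewrite -val_eqE /= eqn0Ngt n_gt0. Qed.

Lemma S_Mins_Cx {pre post pre' post' : 'I_n.+1 -> H} :
  (forall i, gamma t (pre i) = pre' i) -> (forall i, gamma t (post i) = post' i) ->
  post ord_max = 1 -> S t (Mins pre post (Cx n t)) = Mins pre' post' (Cx n 0).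
Proof.
move=> epre epost post1; have post'1 : post' ord_max = 1 by rewrite -epost post1 gamma1.
rewrite (Mins_Cx n_gt0 post1) (Mins_Cx n_gt0 post'1) S_mulr_y gammaM gamma_prod epre.
by under eq_bigr do rewrite !gammaM epre epost gamma_Cx_slot.
Qed.

Lemma S_Mins_Cw s (pre post pre' post' : 'I_n.+1 -> H) :
  (forall i, gamma t (pre i) = pre' i) -> (forall i, gamma t (post i) = post' i) ->
  post ord_max = 1 -> S t (Mins pre post (Cw n t s)) = Mins pre' post' (Cw n 0 s).
Proof.
elim: s pre post pre' post' => [|c s IHs] pre post pre' post' epre epost post1.
  by rewrite /= [Mins pre post 0]linear0 [Mins pre' post' 0]linear0 [S t 0]linear0.
rewrite !Cw_cons !Mins_ract_lact !gammainv0 [S t _]linearD /= -/(S t).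
have epre2 i : gamma t (if i == ord_max then pre i * gammainv t (wd [:: c]) else pre i)
               = if i == ord_max then pre' i * wd [:: c] else pre' i.
  by case: (i == ord_max); rewrite ?gammaM ?gammaK epre.
have epost2 i : gamma t (if i == ord0 then gammainv t (wd s) * post i else post i)
                = if i == ord0 then wd s * post' i else post' i.
  by case: (i == ord0); rewrite ?gammaM ?gammaK epost.
have post2 : (if ord_max == ord0 :> 'I_n.+1 then gammainv t (wd s) * post ord_max
              else post ord_max) = 1 by rewrite ord_max_eq0F.
apply: (f_equal2 +%R); last exact: IHs _ _ _ _ epre2 epost post1.
have S_Cx := S_Mins_Cx epre epost2 post2.
case: c {epre2}; first exact: S_Cx.
by rewrite [Mins pre _ (- _)]linearN [Mins pre' _ (- _)]linearN [S t _]linearN /= -/(S t) S_Cx.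
Qed.

End GammaTwist.

Theorem lemma3p1 (n : nat) (w : H) :
  (0 < n)%N -> S tv (rho n tv w) = rho n 0 w.
Proof.
move=> n_gt0; rewrite /rho /C !Mn_Mins !(lin_comp (Mins (fun=> 1) (fun=> 1))) [LHS]lin_comp.
apply: eq_lin => m /=; apply: S_Mins_Cw => // i; exact: gamma1.
Qed.
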